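(* Let $G$ be a simple connected graph with $n$ vertices and $m$ edges, with maximum degree $\Delta$. Let $k=\left\lceil \frac{2m-n+1}{\Delta}\right\rceil$. Then $\rho_{ABC}(G)\le \sqrt{\Delta+k-2}$.
   Context: For a simple connected graph $G$ with vertex set $\{v_1,\dots,v_n\}$ and degrees $d_i$, the ABC matrix is $M(G)=(m_{ij})_{n\times n}$ with $m_{ij}=\sqrt{(d_i+d_j-2)/(d_id_j)}$ if $v_iv_j$ is an edge and $m_{ij}=0$ otherwise. The ABC spectral radius $\rho_{ABC}(G)$ is the largest eigenvalue of $M(G)$. *)

From HB Require Import structures.
From mathcomp Require Import all_boot all_order all_algebra.
From mathcomp Require Import reals.
Set Implicit Arguments. Unset Strict Implicit. Unset Printing Implicit Defensive.
Import Order.TTheory GRing.Theory Num.Theory.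
Local Open Scope ring_scope.

Definition simple_graph (n : nat) (e : rel 'I_n) : Prop :=
  symmetric e /\ irreflexive e.

Definition connected_graph (n : nat) (e : rel 'I_n) : Prop :=
  forall x y : 'I_n, connect e x y.

Definition deg (n : nat) (e : rel 'I_n) (v : 'I_n) : nat := #|[set u | e v u]|.

Definition nedges (n : nat) (e : rel 'I_n) : nat :=
  #|[set E : {set 'I_n} | [exists x, exists y, e x y && (E == [set x; y])]]|.

Definition maxdeg (n : nat) (e : rel 'I_n) : nat := (\max_(v : 'I_n) deg e v)%N.

Definition ABC_matrix (R : realType) (n : nat) (e : rel 'I_n) : 'M[R]_n :=
  \matrix_(i, j)
    (if e i j then
       Num.sqrt (((deg e i)%:R + (deg e j)%:R - 2) / ((deg e i)%:R * (deg e j)%:R))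
     else 0).

Definition is_ABC_spectral_radius (R : realType) (n : nat) (e : rel 'I_n) (r : R) : Prop :=
  eigenvalue (ABC_matrix R e) r /\
  (forall l : R, eigenvalue (ABC_matrix R e) l -> l <= r).

(* Let [l] be an eigenvalue of the ABC matrix [M] of [G] and [d_v] the degrees.
   The largest coordinate of an eigenvector divided by [sqrt d_v] gives
   a vertex [i] with [|l| d_i <= sum_(j ~ i) sqrt (d_i + d_j - 2)], so by
   Cauchy-Schwarz [l^2 d_i <= sum_(j ~ i) (d_i + d_j - 2)].  The neighbour
   degree sum [A] of [i] is at most [d_i Delta], and at most [2m - n + 1 <= k Delta]
   because every other vertex has degree at least 1; these two bounds give
   [d_i^2 + A <= d_i (Delta + k)], i.e. [l^2 <= Delta + k - 2]. *)
From HB Require Import structures.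
From mathcomp Require Import all_boot all_order all_algebra.
From mathcomp Require Import reals.
From mathcomp Require Import zify ring lra.
Set Implicit Arguments. Unset Strict Implicit. Unset Printing Implicit Defensive.
Import Order.TTheory GRing.Theory Num.Theory.
Local Open Scope ring_scope.

Lemma sqr_sum_le_card_sum_sqr (R : realFieldType) (I : finType) (P : pred I)
    (a : I -> R) :
  (\sum_(i | P i) a i) ^+ 2 <= #|P|%:R * \sum_(i | P i) a i ^+ 2.
Proof.
have amgm (x y : R) : x * y *+ 2 <= x ^+ 2 + y ^+ 2.
  by have := sqr_ge0 (x - y); rewrite sqrrB; lra.
rewrite -(ler_pMn2r (_ : (0 < 2)%N)) // expr2 mulr_suml.
have -> : #|P|%:R * (\sum_(i | P i) a i ^+ 2) *+ 2 =
    \sum_(i | P i) \sum_(j | P j) (a i ^+ 2 + a j ^+ 2).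
  under [RHS]eq_bigr do rewrite big_split /= sumr_const.
  by rewrite big_split /= sumr_const sumrMnl mulr_natl mulr2n.
rewrite -sumrMnl; apply: ler_sum => i _; rewrite mulr_sumr -sumrMnl.
by apply: ler_sum => j _; apply: amgm.
Qed.

Lemma sqr_add_le_mul_add (R : realDomainType) (d D K A : R) :
  0 <= d <= D -> A <= d * D -> A <= D * K -> d ^+ 2 + A <= d * (D + K).
Proof.
case/andP=> d_ge0 d_le_D A_le_dD A_le_DK.
have [d_le_K|K_lt_d] := lerP d K.
  by have := ler_wpM2l d_ge0 d_le_K; nra.
have : 0 <= (D - d) * (d - K) by rewrite mulr_ge0 // subr_ge0 // ltW.
nra.
Qed.

Lemma sqrtr_mul_divK (R : rcfType) (c z : R) : 0 < c ->
  Num.sqrt c * Num.sqrt (z / c) = Num.sqrt z.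
Proof. by move=> c_gt0; rewrite -sqrtrM ?ltW // mulrC divfK ?gt_eqF. Qed.

Lemma eigenvalue_norm_le_weighted_colsum (R : realFieldType) (n : nat)
    (A : 'M[R]_n) (p : 'I_n -> R) (l : R) :
  (forall j, 0 < p j) -> eigenvalue A l ->
  exists i, `|l| * p i <= \sum_j p j * `|A j i|.
Proof.
move=> p_gt0 /eigenvalueP [v vA v_neq0].
have [j0 vj0_neq0] : exists j, v 0 j != 0.
  apply/existsP; apply: contraNT v_neq0 => /existsPn v0.
  by apply/eqP/rowP => j; rewrite mxE; apply/eqP/negbNE/v0.
pose u j := v 0 j / p j.
have vE j : v 0 j = u j * p j by rewrite divfK ?gt_eqF.
have [i _ u_max] := arg_maxP (fun j => `|u j|) (isT : xpredT j0).
exists i; have ui_gt0 : 0 < `|u i|.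
  apply: (lt_le_trans _ (u_max j0 isT)).
  by rewrite normr_gt0 mulf_eq0 invr_eq0 negb_or vj0_neq0 gt_eqF.
rewrite -(ler_pM2l ui_gt0) mulrCA -(ger0_norm (ltW (p_gt0 i))).
rewrite -normrM -vE -normrM.
have -> : l * v 0 i = \sum_j v 0 j * A j i.
  by move/rowP/(_ i): vA; rewrite !mxE => ->.
rewrite mulr_sumr; apply: (le_trans (ler_norm_sum _ _ _)); apply: ler_sum => j _.
rewrite normrM vE normrM (ger0_norm (ltW (p_gt0 j))) -mulrA.
by apply: ler_wpM2r; [exact: mulr_ge0 (ltW (p_gt0 j)) _ | exact: u_max].
Qed.

Section Degrees.
Variables (n : nat) (e : rel 'I_n).

Lemma degE v : deg e v = #|e v|.
Proof. exact: cardsE. Qed.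

Lemma deg_gt0_connected : (1 < n)%N -> connected_graph e -> forall v, (0 < deg e v)%N.
Proof.
move=> n_gt1 e_conn v.
have [w w_neq_v] : exists w : 'I_n, w != v.
  have [->|v_neq] := eqVneq v (Ordinal n_gt1).
    by exists (Ordinal (ltnW n_gt1)); rewrite -val_eqE.
  by exists (Ordinal n_gt1); rewrite eq_sym v_neq.
have /connectP [[|u p] /= vp w_last] := e_conn v w.
  by rewrite w_last eqxx in w_neq_v.
case/andP: vp => evu _; rewrite /deg card_gt0; apply/set0Pn; exists u; by rewrite inE.
Qed.

Lemma sum_deg_leq_nedges : (\sum_v deg e v <= 2 * nedges e)%N.
Proof.
rewrite /nedges; set edges := [set E | _].
have deg_leq v : (deg e v <= #|[set E in edges | v \in E]|)%N.
  rewrite /deg -(@card_in_imset _ _ (fun u => [set v; u])).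
    apply/subset_leq_card/subsetP => E /imsetP [u]; rewrite inE => evu ->.
    rewrite !inE eqxx andbT; apply/existsP; exists v; apply/existsP; exists u.
    by rewrite evu eqxx.
  move=> u w _ _ /= vu_vw.
  have : u \in [set v; w] by rewrite -vu_vw set22.
  rewrite !inE => /orP [/eqP uv|/eqP //].
  have : w \in [set v; u] by rewrite vu_vw set22.
  by rewrite !inE uv orbb => /eqP.
apply: (leq_trans (n := \sum_v #|[set E in edges | v \in E]|)); first exact: leq_sum.
have -> : (\sum_v #|[set E in edges | v \in E]| = \sum_(E in edges) #|E|)%N.
  transitivity (\sum_v \sum_(E in edges) (v \in E : nat))%N.
    apply: eq_bigr => v _; rewrite -sum1_card [LHS]big_mkcond [RHS]big_mkcond.
    by apply: eq_bigr => E _; rewrite inE; case: (E \in edges).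
  rewrite exchange_big; apply: eq_bigr => E _.
  by rewrite -sum1_card [RHS]big_mkcond.
rewrite mulnC -sum_nat_const.
apply: leq_sum => _ /[!inE] /existsP [x /existsP [y /andP [_ /eqP ->]]].
by rewrite cards2; case: (x != y).
Qed.

Lemma sum_nbr_deg_leq : irreflexive e -> (forall v, 0 < deg e v)%N -> forall v,
  (\sum_(u | e v u) deg e u + n <= (\sum_w deg e w).+1)%N.
Proof.
move=> e_irr deg_gt0 v.
(* Summed over [w]: each vertex outside [v] and its neighbours contributes at
   least 1 to the degree sum, and [v] itself contributes [deg e v]. *)
have pointwise w :
    ((if e v w then deg e w else 0) + 1 + (if w == v then (deg e v).-1 else 0)
     <= deg e w + (if e v w then 1 else 0))%N.
  have := deg_gt0 w; have [->|_] := eqVneq w v; first by rewrite e_irr; lia.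
  by case: (e v w) => /=; lia.
have := @leq_sum _ (index_enum _) xpredT _ _ (fun w _ => pointwise w).
rewrite !big_split /= -!big_mkcond big_pred1_eq !sum1_card card_ord -degE.
(* [set] merges syntactically different instances of the same sums for [lia]. *)
set A := \sum_(u | e v u) _; set S := \sum_w _.
by have := deg_gt0 v; lia.
Qed.

End Degrees.

Section ABCSpectralBound.
Variables (R : realType) (n : nat) (e : rel 'I_n).
Hypotheses (n_gt1 : (1 < n)%N) (e_sym : symmetric e) (e_irr : irreflexive e).
Hypothesis e_conn : connected_graph e.

Local Notation d v := ((deg e v)%:R : R).

Let deg_gt0 := deg_gt0_connected n_gt1 e_conn.

Lemma maxdeg_gt0 : (0 < maxdeg e)%N.
Proof. exact: leq_trans (deg_gt0 (Ordinal (ltnW n_gt1))) (leq_bigmax _). Qed.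

Lemma abc_row_sum_le (K : R) i :
  2 * (nedges e)%:R - n%:R + 1 <= (maxdeg e)%:R * K ->
  \sum_(j | e i j) (d i + d j - 2) <= d i * ((maxdeg e)%:R + K - 2).
Proof.
move=> ceil_K.
have deg_le_max v : (deg e v <= maxdeg e)%N by apply: leq_bigmax.
have nbr_le_deg_max : \sum_(j | e i j) d j <= d i * (maxdeg e)%:R.
  rewrite degE -sum1_card natr_sum mulr_suml; apply: ler_sum => j _.
  by rewrite mul1r ler_nat.
have nbr_le_nedges : \sum_(j | e i j) d j <= 2 * (nedges e)%:R - n%:R + 1.
  have : (\sum_(j | e i j) deg e j + n <= (2 * nedges e).+1)%N.
    apply: leq_trans (sum_nbr_deg_leq e_irr deg_gt0 i) _.
    by rewrite ltnS sum_deg_leq_nedges.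
  rewrite -(ler_nat R) natrD natr_sum -addn1 natrD natrM; lra.
have -> : \sum_(j | e i j) (d i + d j - 2) = d i ^+ 2 - 2 * d i + \sum_(j | e i j) d j.
  by rewrite !big_split /= !sumr_const -degE; ring.
have deg_i_range : 0 <= d i <= (maxdeg e)%:R by rewrite ler0n ler_nat deg_le_max.
have := sqr_add_le_mul_add deg_i_range nbr_le_deg_max (le_trans nbr_le_nedges ceil_K).
rewrite mulrBr; lra.
Qed.

Lemma abc_eigenvalue_row_bound l : eigenvalue (ABC_matrix R e) l ->
  exists i, `|l| * d i <= \sum_(j | e i j) Num.sqrt (d i + d j - 2).
Proof.
have sqrt_deg_gt0 j : 0 < Num.sqrt (d j) by rewrite sqrtr_gt0 ltr0n deg_gt0.
case/(eigenvalue_norm_le_weighted_colsum sqrt_deg_gt0) => i bound; exists i.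
have -> : `|l| * d i = `|l| * Num.sqrt (d i) * Num.sqrt (d i).
  by rewrite -mulrA -expr2 sqr_sqrtr ?ler0n.
apply: le_trans (ler_wpM2r (ltW (sqrt_deg_gt0 i)) bound) _.
rewrite mulr_suml [leRHS]big_mkcond; apply: ler_sum => j _.
rewrite /ABC_matrix mxE e_sym; case: (e i j); last by rewrite normr0 mulr0 mul0r.
rewrite ger0_norm ?sqrtr_ge0 // mulrAC -sqrtrM ?ler0n // (addrC (d j)) (mulrC (d j)).
by rewrite sqrtr_mul_divK // mulr_gt0 ?ltr0n ?deg_gt0.
Qed.

Lemma abc_eigenvalue_le_sqrt (K : R) l :
  2 * (nedges e)%:R - n%:R + 1 <= (maxdeg e)%:R * K ->
  eigenvalue (ABC_matrix R e) l -> l <= Num.sqrt ((maxdeg e)%:R + K - 2).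
Proof.
move=> ceil_K /abc_eigenvalue_row_bound [i l_row].
have row_sum := abc_row_sum_le i ceil_K.
have deg_ge1 j : 1 <= d j by rewrite ler1n deg_gt0.
have := sqr_sum_le_card_sum_sqr (e i) (fun j => Num.sqrt (d i + d j - 2)).
rewrite -degE (eq_bigr _ (fun j _ => sqr_sqrtr _)); last first.
  by move=> j _; have := deg_ge1 i; have := deg_ge1 j; lra.
move=> cauchy_schwarz.
have l_sqr : l ^+ 2 <= (maxdeg e)%:R + K - 2.
  have di_gt0 : 0 < d i by rewrite ltr0n.
  rewrite -(ler_pM2r (exprn_gt0 2 di_gt0)) -[l ^+ 2](real_normK (num_real l)) -exprMn.
  apply: le_trans (le_trans _ cauchy_schwarz) _.
    have l_di_ge0 : 0 <= `|l| * d i by rewrite mulr_ge0 ?ler0n.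
    by rewrite ler_sqr ?nnegrE // (le_trans l_di_ge0 l_row).
  by rewrite [leRHS]mulrC expr2 -mulrA ler_pM2l.
apply: le_trans (ler_norm l) _.
by rewrite -sqrtr_sqr ler_sqrt // (le_trans (sqr_ge0 l)).
Qed.

End ABCSpectralBound.

Theorem corollary2p3 (R : realType) (n : nat) (e : rel 'I_n) (rho : R) :
  (1 < n)%N ->
  simple_graph e ->
  connected_graph e ->
  is_ABC_spectral_radius e rho ->
  let m := nedges e in
  let Delta := maxdeg e in
  let k : int := Num.ceil ((2 * m%:R - n%:R + 1) / Delta%:R : R) in
  rho <= Num.sqrt (Delta%:R + k%:~R - 2).
Proof.
move=> n_gt1 [e_sym e_irr] e_conn [rho_eig _] /=.
apply: (abc_eigenvalue_le_sqrt n_gt1 e_sym e_irr e_conn _ rho_eig).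
have Delta_gt0 : 0 < (maxdeg e)%:R :> R by rewrite ltr0n maxdeg_gt0.
by rewrite [leRHS]mulrC -ler_pdivrMr // ceil_ge.
Qed.
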